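(* The intersection graph $G$ of $n$ objects in the plane, each of which is either a horizontal line segment or a vertical line, admits a $3$-hop spanner $\widehat{G}$ with $O(n)$ edges.
   Context: The intersection graph has the objects as vertices, with an edge iff the two objects intersect. For a graph $G$ and integer $t\ge1$, a $t$-hop spanner is a subgraph $\widehat{G}$ of $G$ on the same vertex set such that for every edge $uv\in E(G)$ there is a $u$–$v$ path in $\widehat{G}$ with at most $t$ edges. *)

From HB Require Import structures.
From mathcomp Require Import all_boot all_order all_algebra.

From Stdlib Require Import Reals.
Set Implicit Arguments. Unset Strict Implicit. Unset Printing Implicit Defensive.
Import Order.TTheory GRing.Theory Num.Theory.

Definition point := (Rdefinitions.R * Rdefinitions.R)%type.

Inductive obj :=
| HSeg (x1 x2 y : Rdefinitions.R)
| VLine (c : Rdefinitions.R).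

Definition on_obj (o : obj) (p : point) : Prop :=
  match o with
  | HSeg x1 x2 y => p.2 = y /\ ((Rmin x1 x2 <= p.1)%R /\ (p.1 <= Rmax x1 x2)%R)
  | VLine c => p.1 = c
  end.

Definition intersect (o1 o2 : obj) : Prop :=
  exists p : point, on_obj o1 p /\ on_obj o2 p.

Definition inter_graph (n : nat) (O : 'I_n -> obj) (i j : 'I_n) : Prop :=
  i != j /\ intersect (O i) (O j).

Definition is_hop_spanner (V : finType) (G : V -> V -> Prop) (H : rel V)
    (t : nat) : Prop :=
  (forall u v, H u v -> H v u) /\
  (forall u v, H u v -> G u v) /\
  (forall u v, G u v ->
     exists s : seq V, [/\ path H u s, last u s = v & size s <= t]).

Definition num_edges (n : nat) (H : rel 'I_n) : nat :=
  #|[set p : 'I_n * 'I_n | H p.1 p.2 && (p.1 < p.2)%N]|.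

From Stdlib Require Import Reals.
From mathcomp Require Import all_boot all_order all_algebra Rstruct.
Set Implicit Arguments. Unset Strict Implicit. Unset Printing Implicit Defensive.
Import Order.TTheory.

(* Both kinds of intersection are incidences between an interval and a point of
   a totally ordered line: a horizontal segment, or a vertical line seen as a
   degenerate interval, contains the abscissa of a vertical line; or a horizontal
   segment contains the left endpoint of a collinear one.  For any such incidence
   structure, let P0 be an inclusion-minimal set of points meeting every nonempty
   maximal interval.  Minimality leaves at most two points of P0 in each maximal
   interval, as a middle one could be dropped.  Give every p in P0 a left hub, a
   maximal interval through p reaching furthest left, and a right hub.  Link each
   interval s to one point x it contains and to a point p of P0 in a maximal
   interval containing s, and link each object to the left hubs of those p in P0
   whose hub contains it to the left of p (at most two: they all lie in the hub of
   the rightmost one), and symmetrically on the right.  If s contains v, say left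
   of p, then s - p - hub(p) - v is a walk when s contains p, and otherwise p lies
   right of all of s and s - x - hub(p) - v is one.  Every object gets at most six
   links per incidence structure. *)

Section Hops.
Variable T : eqType.
Implicit Types (r : rel T) (u v : T).

Definition hop r : rel T := fun a b => (a == b) || r a b.

Definition hop3 r u v : Prop := exists a b, [/\ hop r u a, hop r a b & hop r b v].

Lemma hop3_sub r r' u v : subrel r r' -> hop3 r u v -> hop3 r' u v.
Proof.
have hop_sub a b : subrel r r' -> hop r a b -> hop r' a b.
  by rewrite /hop => sub /orP[-> // | /sub ->]; rewrite orbT.
by move=> sub [a [b [h1 h2 h3]]]; exists a, b; split; apply: hop_sub.
Qed.

Lemma hop3_sym r u v : symmetric r -> hop3 r u v -> hop3 r v u.
Proof.
move=> sym_r [a [b [h1 h2 h3]]]; exists b, a.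
by split; rewrite /hop eq_sym sym_r.
Qed.

Lemma hop3_path r u v :
  hop3 r u v -> exists s, [/\ path r u s, last u s = v & size s <= 3].
Proof.
have step s w : path r u s -> hop r (last u s) w ->
    exists s', [/\ path r u s', last u s' = w & size s' <= (size s).+1].
  move=> p_s /orP[/eqP <- | e]; first by exists s.
  by exists (rcons s w); rewrite rcons_path p_s e last_rcons size_rcons.
case=> a [b [h1 h2 h3]].
have [s1 [p1 l1 z1]] := step [::] a isT h1; rewrite -l1 in h2.
have [s2 [p2 l2 z2]] := step s1 b p1 h2; rewrite -l2 in h3.
have [s3 [p3 l3 z3]] := step s2 v p2 h3.
by exists s3; split=> //; apply: (leq_trans z3); rewrite ltnS (leq_trans z2).
Qed.

End Hops.

Section Neighbourhoods.
Variable V : finType.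
Implicit Types (F G : V -> {set V}).

Definition adj F : rel V := fun a b => (a != b) && ((b \in F a) || (a \in F b)).

Lemma adj_sym F : symmetric (adj F).
Proof. by move=> a b; rewrite /adj eq_sym orbC. Qed.

Lemma adj_sub F G : (forall v, F v \subset G v) -> subrel (adj F) (adj G).
Proof.
rewrite /adj => FG a b /andP[-> /orP[] /(subsetP (FG _)) ->] //.
by rewrite orbT.
Qed.

Lemma hop3_adj F s a h v : a \in F s -> h \in F a -> h \in F v -> hop3 (adj F) s v.
Proof.
move=> sa ha hv; exists a, h; split; rewrite /hop /adj.
- by case: eqP => //= _; rewrite sa.
- by case: eqP => //= _; rewrite ha.
- by case: eqP => //= _; rewrite hv orbT.
Qed.

Definition hop3_cover (inc : rel V) (k : nat) F :=
  [/\ forall v, #|F v| <= k,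
      forall v w, w \in F v -> inc v w || inc w v &
      forall s x, inc s x -> hop3 (adj F) s x].

Lemma hop3_coverU inc1 inc2 k1 k2 F1 F2 :
  hop3_cover inc1 k1 F1 -> hop3_cover inc2 k2 F2 ->
  hop3_cover [rel s x | inc1 s x || inc2 s x] (k1 + k2) (fun v => F1 v :|: F2 v).
Proof.
move=> [deg1 inc1F walk1] [deg2 inc2F walk2]; split.
- by move=> v; rewrite (leq_trans (leq_card_setU _ _)) ?leq_add.
- move=> v w; rewrite inE => /orP[/inc1F | /inc2F] /orP[] /= ->; rewrite ?orbT //.
- move=> s x /orP[/walk1 | /walk2]; apply: hop3_sub; apply: adj_sub => v.
    exact: subsetUl.
  exact: subsetUr.
Qed.

Lemma hop_spanner_of_cover (G : V -> V -> Prop) inc k F :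
  (forall u v, G u v <-> (u != v) && (inc u v || inc v u)) ->
  hop3_cover inc k F -> is_hop_spanner G (adj F) 3.
Proof.
move=> GE [_ incF walk]; split; first by move=> u v; rewrite adj_sym.
split.
- move=> u v /andP[uv /orP[/incF | /incF]] inc_uv; apply/GE; rewrite uv //=.
  by rewrite orbC.
- move=> u v /GE /andP[_ /orP[/walk | /walk /(hop3_sym (adj_sym F))]]; exact: hop3_path.
Qed.

End Neighbourhoods.

Lemma num_edges_adj n (F : 'I_n -> {set 'I_n}) k :
  (forall v, #|F v| <= k) -> num_edges (adj F) <= 2 * k * n.
Proof.
move=> deg; set D := [set p : 'I_n * 'I_n | p.2 \in F p.1].
have cardD : #|D| <= k * n.
  have -> : #|D| = \sum_i \sum_(j in F i) 1 by rewrite pair_big_dep sum1dep_card.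
  apply: (@leq_trans (\sum_(i < n) k)); last by rewrite sum_nat_const card_ord mulnC.
  by apply: leq_sum => i _; rewrite sum1_card.
have sub : [set p | adj F p.1 p.2 && (p.1 < p.2)] \subset D :|: [set (p.2, p.1) | p in D].
  apply/subsetP => -[a b]; rewrite !inE /= => /andP[/andP[_ /orP[h | h]] _].
    by rewrite h.
  by apply/orP; right; apply/imsetP; exists (b, a); rewrite ?inE.
rewrite /num_edges (leq_trans (subset_leq_card sub)) // (leq_trans (leq_card_setU _ _)) //.
by rewrite -mulnA mul2n -addnn leq_add // (leq_trans (leq_imset_card _ _)).
Qed.

Definition interval_hits (V : Type) d (T : orderType d) (isI isP : pred V)
    (lo hi c : V -> T) : rel V :=
  fun s x => [&& isI s, isP x, (lo s <= c x)%O & (c x <= hi s)%O].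

Section Stabbing.
Variables (V : finType) (hits : rel V).
Implicit Types (s t m p x : V) (P : {set V}).

Definition hitset s := [set x | hits s x].

Definition maximal m :=
  [forall t, (hitset m \subset hitset t) ==> (hitset t \subset hitset m)].

Lemma maximalP m t : maximal m -> hitset m \subset hitset t -> hitset t \subset hitset m.
Proof. by move/forallP/(_ t)/implyP. Qed.

Lemma exists_maximal s : exists2 m, maximal m & hitset s \subset hitset m.
Proof.
have [m sm maxm] :=
  @arg_maxnP _ s (fun t => hitset s \subset hitset t) (fun t => #|hitset t|) (subxx _).
exists m => //; apply/forallP => t; apply/implyP => mt.
have /eqP <- // : hitset m == hitset t.
by rewrite eqEcard mt; apply: maxm; apply: subset_trans sm mt.
Qed.

Definition stabs P :=
  [forall m, maximal m && (hitset m != set0) ==> (hitset m :&: P != set0)].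

Lemma stabsT : stabs setT.
Proof. by apply/forallP => m; apply/implyP => /andP[_]; rewrite setIT. Qed.

Variables (P0 : {set V}) (P0_min : minset stabs P0).

Definition rep s := odflt s [pick x | hits s x].

Definition anchor s := odflt s
  [pick p in P0 | [exists m, [&& maximal m, hitset s \subset hitset m & hits m p]]].

Definition near s := hitset s :&: [set rep s; anchor s].

Lemma rep_hit s x : hits s x -> hits s (rep s).
Proof. by rewrite /rep; case: pickP => [y -> // | /(_ x) ->]. Qed.

Lemma anchorP s x : hits s x -> exists2 m, maximal m &
  [/\ hitset s \subset hitset m, anchor s \in P0 & hits m (anchor s)].
Proof.
move=> hsx; rewrite /anchor; case: pickP => [p /andP[pP /existsP[m /and3P[]]] | none].
  by exists m.
have [m maxm sm] := exists_maximal s.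
have /forallP/(_ m) := minsetp P0_min; rewrite maxm /= => /implyP stab.
have /set0Pn[p /setIP[]] : hitset m :&: P0 != set0.
  by apply: stab; apply/set0Pn; exists x; apply: (subsetP sm); rewrite inE.
rewrite inE => hmp pP.
by have := none p; rewrite pP /=; case/existsP; exists m; rewrite maxm sm.
Qed.

Lemma card_near s : #|near s| <= 2.
Proof.
by apply: leq_trans (subset_leq_card (subsetIr _ _)) _; rewrite cards2 ltnS leq_b1.
Qed.

Section Ordered.
Variables (d : Order.disp_t) (T : orderType d) (isI isP : pred V) (lo hi c : V -> T).
Hypothesis hitsE : hits =2 interval_hits isI isP lo hi c.
Local Open Scope order_scope.

Lemma hits_lo s x : hits s x -> lo s <= c x.
Proof. by rewrite hitsE => /and4P[]. Qed.

Lemma hits_hi s x : hits s x -> c x <= hi s.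
Proof. by rewrite hitsE => /and4P[]. Qed.

Lemma hits_between m x t y : hits m x -> hits t y -> lo m <= c y -> c y <= hi m -> hits m y.
Proof.
rewrite !hitsE => /and4P[Im _ _ _] /and4P[_ Py _ _] l h.
by rewrite /interval_hits Im Py l h.
Qed.

Lemma maximal_P0_mid m p1 p p3 :
  maximal m -> p1 \in P0 -> p \in P0 -> p3 \in P0 ->
  hits m p1 -> hits m p -> hits m p3 -> c p1 <= c p -> c p <= c p3 ->
  p \in [set p1; p3].
Proof.
move=> maxm P1 Pp P3 hm1 hmp hm3 c1p cp3; apply: contraT; rewrite !inE negb_or.
case/andP=> np1 np3.
(* A maximal interval through p avoiding p1 and p3 would lie inside m. *)
suff /(minsetinf P0_min)/(_ (subD1set P0 p))/setP/(_ p) : stabs (P0 :\ p).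
  by rewrite !inE eqxx Pp.
apply/forallP => nu; apply/implyP => /andP[maxnu nonempty].
have witness w : hits nu w -> w \in P0 -> w != p -> hitset nu :&: (P0 :\ p) != set0.
  by move=> hw wP wp; apply/set0Pn; exists w; rewrite !inE hw wP wp.
have /forallP/(_ nu) := minsetp P0_min; rewrite maxnu nonempty /=.
case/set0Pn=> q /setIP[]; rewrite inE => hq qP.
have [qp | ] := eqVneq q p; last exact: witness.
rewrite {q}qp in hq qP.
have [h1 | n1] := boolP (hits nu p1); first by apply: (witness p1) => //; rewrite eq_sym.
have [h3 | n3] := boolP (hits nu p3); first by apply: (witness p3) => //; rewrite eq_sym.
have lt1 : c p1 < lo nu.
  rewrite ltNge; apply: contra n1 => l.
  exact: hits_between hq hm1 l (le_trans c1p (hits_hi hq)).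
have lt3 : hi nu < c p3.
  rewrite ltNge; apply: contra n3 => h.
  exact: hits_between hq hm3 (le_trans (hits_lo hq) cp3) h.
have nu_m : hitset nu \subset hitset m.
  apply/subsetP => w; rewrite !inE => hw.
  apply: (hits_between hm1 hw).
    exact: le_trans (hits_lo hm1) (le_trans (ltW lt1) (hits_lo hw)).
  exact: le_trans (hits_hi hw) (le_trans (ltW lt3) (hits_hi hm3)).
by move: n1; have /subsetP/(_ p1) := maximalP maxnu nu_m; rewrite !inE => ->.
Qed.

Lemma card_maximal_P0 m : maximal m -> #|hitset m :&: P0| <= 2.
Proof.
move=> maxm; set A := hitset m :&: P0.
have [-> | /set0Pn[a0 a0A]] := eqVneq A set0; first by rewrite cards0.
have [a aA amin] := arg_minP c a0A.
have [b bA bmax] := arg_maxP c a0A.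
have inA q : q \in A -> hits m q /\ q \in P0 by rewrite !inE => /andP.
have [hma aP] := inA a aA; have [hmb bP] := inA b bA.
have /subset_leq_card/leq_trans : A \subset [set a; b].
  apply/subsetP => q qA; have [hmq qP] := inA q qA.
  exact: maximal_P0_mid maxm aP qP bP hma hmq hmb (amin q qA) (bmax q qA).
by apply; rewrite cards2 ltnS leq_b1.
Qed.

Definition is_lhub p m :=
  [&& maximal m, hits m p & [forall t, maximal t && hits t p ==> (lo m <= lo t)]].

Definition lhub p := odflt p [pick m | is_lhub p m].

Lemma lhubP p m : maximal m -> hits m p -> is_lhub p (lhub p).
Proof.
move=> maxm hmp; rewrite /lhub; case: pickP => // none.
have mp : maximal m && hits m p by rewrite maxm hmp.
have [L /andP[maxL hLp] minL] := arg_minP (P := fun t => maximal t && hits t p) lo mp.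
have := none L; rewrite /is_lhub maxL hLp /=; move/negbT/negP; case.
by apply/forallP => t; apply/implyP; exact: minL.
Qed.

Definition lsources v :=
  [set p in P0 | [&& is_lhub p (lhub p), hits (lhub p) v & c v <= c p]].

Lemma lsources_hits p v : p \in lsources v -> hits (lhub p) v.
Proof. by rewrite inE => /and4P[]. Qed.

Lemma card_lsources v : #|lsources v| <= 2.
Proof.
have [-> | /set0Pn[a0 a0A]] := eqVneq (lsources v) set0; first by rewrite cards0.
have [p3 p3A p3max] := arg_maxP c a0A.
have /[!inE] /and4P[_ /and3P[maxL hLp3 _] hLv _] : p3 \in lsources v := p3A.
apply: leq_trans (card_maximal_P0 maxL); apply/subset_leq_card/subsetP => q qA.
move: (qA); rewrite !inE => /and4P[-> /and3P[_ hq _] _ cvq]; rewrite andbT.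
apply: (hits_between hLp3 hq (le_trans (hits_lo hLv) cvq)).
exact: le_trans (p3max q qA) (hits_hi hLp3).
Qed.

Lemma lsources_mem m p w :
  maximal m -> p \in P0 -> hits m p -> hits m w -> c w <= c p -> p \in lsources w.
Proof.
move=> maxm pP hmp hmw cwp; have Lp := lhubP maxm hmp.
move: (Lp) => /and3P[_ hLp /forallP/(_ m)]; rewrite maxm hmp /= => loLm.
rewrite inE pP Lp cwp andbT /=.
exact: hits_between hLp hmw (le_trans loLm (hits_lo hmw)) (le_trans cwp (hits_hi hLp)).
Qed.

Lemma near_lsources s v : hits s v -> c v <= c (anchor s) ->
  exists2 a, a \in near s & (anchor s \in lsources a) && (anchor s \in lsources v).
Proof.
move=> hsv cvp; have [m maxm [sm pP hmp]] := anchorP hsv.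
have hm w : hits s w -> hits m w.
  by move=> hsw; have /subsetP/(_ w) := sm; rewrite !inE; apply.
have -> : anchor s \in lsources v := lsources_mem maxm pP hmp (hm _ hsv) cvp.
have [hsp | nhsp] := boolP (hits s (anchor s)).
  exists (anchor s); first by rewrite !inE hsp eqxx orbT.
  by rewrite andbT (lsources_mem maxm pP hmp (hm _ hsp) (lexx _)).
have hsx := rep_hit hsv; exists (rep s); first by rewrite !inE hsx eqxx.
rewrite andbT; apply: (lsources_mem maxm pP hmp (hm _ hsx)).
rewrite leNgt; apply: contraNN nhsp => cpx.
exact: hits_between hsv hmp (le_trans (hits_lo hsv) cvp) (le_trans (ltW cpx) (hits_hi hsx)).
Qed.

End Ordered.
End Stabbing.

Theorem interval_hits_cover (V : finType) d (T : orderType d) (isI isP : pred V)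
    (lo hi c : V -> T) :
  exists F, hop3_cover (interval_hits isI isP lo hi c) 6 F.
Proof.
set hits := interval_hits isI isP lo hi c.
have hitsE : hits =2 interval_hits isI isP lo hi c by [].
(* Right hubs are left hubs for the reversed order, with lo and hi exchanged. *)
have hitsE_dual : hits =2 interval_hits (T := T^d) isI isP hi lo c.
  by move=> s x; rewrite /hits /interval_hits [X in _ = _ && (_ && X)]andbC.
have [P0 P0_min _] := minset_exists (stabsT hits).
pose Fl v := lhub hits lo @: lsources hits P0 lo c v.
pose Fr v := lhub hits (hi : V -> T^d) @: lsources hits P0 (hi : V -> T^d) c v.
pose F v := near hits P0 v :|: Fl v :|: Fr v.
have near_F s a : a \in near hits P0 s -> a \in F s by rewrite !in_setU => ->.
have Fl_F w p : p \in lsources hits P0 lo c w -> lhub hits lo p \in F w.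
  by move=> pw; rewrite !in_setU (imset_f _ pw) orbT.
have Fr_F w p : p \in lsources hits P0 (hi : V -> T^d) c w ->
    lhub hits (hi : V -> T^d) p \in F w.
  by move=> pw; rewrite !in_setU (imset_f _ pw) orbT.
exists F; split.
- move=> v; rewrite (leq_trans (leq_card_setU _ _)) // -[6]/(4 + 2) leq_add //.
    rewrite (leq_trans (leq_card_setU _ _)) // -[4]/(2 + 2) leq_add ?card_near //.
    exact: leq_trans (leq_imset_card _ _) (card_lsources P0_min hitsE v).
  exact: leq_trans (leq_imset_card _ _) (card_lsources P0_min hitsE_dual v).
- move=> v w; rewrite !inE -orbA.
  case/or3P=> [/andP[-> //] | |] /imsetP[p /lsources_hits hw ->]; by rewrite hw orbT.
- move=> s v hsv; have [cmp | cmp] := leP (c v) (c (anchor hits P0 s)).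
  + have [a /near_F sa /andP[/Fl_F ha /Fl_F hv]] := near_lsources P0_min hitsE hsv cmp.
    exact: hop3_adj sa ha hv.
  + have [a /near_F sa /andP[/Fr_F ha /Fr_F hv]] :=
      near_lsources P0_min hitsE_dual hsv (ltW cmp).
    exact: hop3_adj sa ha hv.
Qed.

Section Objects.
Local Open Scope order_scope.

Definition is_hseg (o : obj) : bool := if o is HSeg _ _ _ then true else false.
Definition is_vline (o : obj) : bool := if o is VLine _ then true else false.

Definition xmin (o : obj) : R :=
  match o with HSeg x1 x2 _ => Rmin x1 x2 | VLine x => x end.
Definition xmax (o : obj) : R :=
  match o with HSeg x1 x2 _ => Rmax x1 x2 | VLine x => x end.
Definition height (o : obj) : R := if o is HSeg _ _ y then y else 0%R.

(* Collinear horizontal segments become intervals of the lexicographic order on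
   (y, x), and a segment contains the left endpoint of another iff that endpoint
   lies between its own (y, xmin) and (y, xmax). *)
Definition yx_min (o : obj) : R *l R := (height o, xmin o).
Definition yx_max (o : obj) : R *l R := (height o, xmax o).

Definition vertical_hit : rel obj := interval_hits predT is_vline xmin xmax xmin.
Definition horizontal_hit : rel obj := interval_hits is_hseg is_hseg yx_min yx_max yx_min.
Definition incidence : rel obj := fun o o' => vertical_hit o o' || horizontal_hit o o'.

Lemma lexi_between d1 d2 (T1 : orderType d1) (T2 : orderType d2) (x y : T1) (a b e : T2) :
  ((x, a) <= (y, b) :> (T1 *l T2)) && ((y, b) <= (x, e) :> (T1 *l T2)) =
  (y == x) && (a <= b <= e).
Proof. by rewrite !lexi_pair; case: ltgtP. Qed.

Lemma intersect_sym o o' : intersect o o' -> intersect o' o.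
Proof. by case=> p [h h']; exists p. Qed.

Lemma intersect_vline o x : intersect o (VLine x) <-> xmin o <= x <= xmax o.
Proof.
case: o => [x1 x2 y | a] /=; split.
- by case=> -[px py] [[_ [/RleP l /RleP h]] /= e]; rewrite -e l h.
- by case/andP=> /RleP l /RleP h; exists (x, y).
- by case=> p [/= -> ->]; rewrite lexx.
- by move/le_anti ->; exists (x, 0%R).
Qed.

Lemma intersect_hsegs x1 x2 y x1' x2' y' :
  intersect (HSeg x1 x2 y) (HSeg x1' x2' y') <->
  horizontal_hit (HSeg x1 x2 y) (HSeg x1' x2' y')
  || horizontal_hit (HSeg x1' x2' y') (HSeg x1 x2 y).
Proof.
rewrite /horizontal_hit /interval_hits /= !lexi_between; split.
- case=> -[px py] [[/= <- [/RleP l /RleP h]] [<- [/RleP l' /RleP h']]]; rewrite eqxx /=.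
  case: (leP (Rmin x1 x2) (Rmin x1' x2')) => m /=; first by rewrite (le_trans l' h).
  by rewrite (ltW m) (le_trans l h').
- have on_left a b z : on_obj (HSeg a b z) (Rmin a b, z).
    by split; [| split; [exact: Rle_refl | exact: Rminmax]].
  rewrite /=; case/orP=> /and3P[/eqP <- /RleP l /RleP h].
    by exists (Rmin x1' x2', y'); split; last exact: on_left.
  by exists (Rmin x1 x2, y); split; first exact: on_left.
Qed.

Lemma intersect_incidence o o' : intersect o o' <-> incidence o o' || incidence o' o.
Proof.
rewrite /incidence /vertical_hit /horizontal_hit.
case: o => [x1 x2 y | a]; case: o' => [x1' x2' y' | b]; rewrite /interval_hits /= ?orbF.
- exact: intersect_hsegs.
- exact: intersect_vline.
- split=> [/intersect_sym/intersect_vline // | h].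
  by apply/intersect_sym/intersect_vline.
- rewrite intersect_vline /=; split=> [-> // | /orP[// | /le_anti ->]].
  by rewrite lexx.
Qed.

End Objects.

Theorem lemma18 :
  exists C : nat, forall (n : nat) (O : 'I_n -> obj),
    exists H : rel 'I_n,
      is_hop_spanner (inter_graph O) H 3 /\ num_edges H <= C * n.
Proof.
exists 24 => n O.
have [Fv cover_v] :=
  interval_hits_cover predT (is_vline \o O) (xmin \o O) (xmax \o O) (xmin \o O).
have [Fh cover_h] :=
  interval_hits_cover (is_hseg \o O) (is_hseg \o O) (yx_min \o O) (yx_max \o O) (yx_min \o O).
have cover := hop3_coverU cover_v cover_h; have [deg _ _] := cover.
exists (adj (fun v => Fv v :|: Fh v)); split; last exact: num_edges_adj deg.
apply: hop_spanner_of_cover cover => u v.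
by rewrite /inter_graph (intersect_incidence (O u)); split=> [[-> ->] | /andP[-> ->]].
Qed.
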